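(* For $m\ge0$ let $p_m(x)=1+\sum_{i=1}^m (ix)^i$. Then $p_m$ has no real root if $m$ is even and exactly one real root (counted with multiplicity) if $m$ is odd. *)

From mathcomp Require Import all_boot all_order all_algebra.
From mathcomp Require Import reals.
Set Implicit Arguments. Unset Strict Implicit. Unset Printing Implicit Defensive.
Import GRing.Theory Num.Theory.
Local Open Scope ring_scope.

Definition pm (R : realType) (m : nat) : {poly R} :=
  1 + \sum_(1 <= i < m.+1) (i%:R *: 'X) ^+ i.

From mathcomp Require Import all_boot all_order all_algebra.
From mathcomp Require Import reals.
From mathcomp Require Import polyrcf polyorder.
From mathcomp Require Import zify ring lra.
Import Order.TTheory GRing.Theory Num.Theory.
Set Implicit Arguments. Unset Strict Implicit.
Local Open Scope ring_scope.

(* For x >= 0 clearly p_m(x) >= 1.  For x = -t < 0 we get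
   p_m(-t) = \sum_(i <= m) (-1)^i a_i with a_i = (i t)^i, and the key fact is that
   (a_i) is a positive log-convex sequence (because n^n is log-convex, a
   consequence of Bernoulli's inequality).  Such a sequence is unimodal, which
   gives two facts about alternating sums, proved for an arbitrary positive
   log-convex sequence:
   - an alternating sum a_0 - a_1 + ... + a_2L of odd length is positive, so p_m
     has no root when m is even;
   - for an even length there is a c with \sum_i (i - c) (-1)^i a_i < 0; since
     r p_m'(r) - c p_m(r) is such a sum, p_m' > 0 at every root r when m is odd.
   A real polynomial whose slope is positive at all of its roots has at most one
   root, and each root is simple.  Finally p_m(-2) <= 0 < p_m(0) since (2i)^i is
   nondecreasing, so for odd m a root exists by the intermediate value theorem. *)

Lemma sum_pairs (V : nmodType) (F : nat -> V) L :
  \sum_(i < L.*2) F i = \sum_(j < L) (F j.*2 + F j.*2.+1).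
Proof.
elim: L => [|L IH]; first by rewrite !big_ord0.
by rewrite doubleS !big_ord_recr /= IH addrA.
Qed.

Lemma signr_double (R : pzRingType) j : (-1) ^+ j.*2 = 1 :> R.
Proof. by rewrite -signr_odd odd_double expr0. Qed.

Section LogConvexSequence.
Variables (R : realFieldType) (a : nat -> R).
Hypothesis a_gt0 : forall i, 0 < a i.
Hypothesis a_logconvex : forall i, a i.+1 ^+ 2 <= a i * a i.+2.

Lemma logconvex_nondecr i : a i <= a i.+1 -> a i.+1 <= a i.+2.
Proof.
move=> le_i; have := a_logconvex i; have := a_gt0 i; rewrite expr2 => ? ?; nra.
Qed.

(* Unimodality on [0, N]: the sequence decreases before some index k and increases
   after it; equivalently (i - k) (a i - a (i+1)) <= 0 for every i < N. *)
Lemma logconvex_single_crossing N :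
  exists k : nat, forall i, (i < N)%N -> (i%:R - k%:R) * (a i - a i.+1) <= 0.
Proof.
have exP : exists i, (N <= i)%N || (a i <= a i.+1) by exists N; rewrite leqnn.
case: (ex_minnP exP) => k Pk k_min; exists k => i iN.
have [lt_ik|le_ki] := ltnP i k.
  have : ~~ ((N <= i)%N || (a i <= a i.+1)).
    by apply: contraL lt_ik => /k_min; rewrite -leqNgt.
  rewrite negb_or -ltNge => /andP[_ /ltW dec].
  by apply: mulr_le0_ge0; rewrite ?subr_le0 ?subr_ge0 // ler_nat ltnW.
suff inc : a i <= a i.+1 by apply: mulr_ge0_le0; rewrite ?subr_ge0 ?subr_le0 // ler_nat.
elim: i le_ki iN => [|i IH]; rewrite leq_eqVlt => /predU1P[<-|lt_ki] iN //.
- by move: Pk; rewrite leqNgt iN.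
- by move: Pk; rewrite leqNgt iN.
by apply: logconvex_nondecr; apply: IH; lia.
Qed.

(* The
   invariant: each partial sum S_L is positive, and either S_L >= a (2L) or the
   sequence is already nondecreasing at 2L - 1 (hence from then on). *)
Lemma logconvex_alternating_gt0 L : 0 < \sum_(i < L.*2.+1) (-1) ^+ i * a i.
Proof.
pose S L := \sum_(i < L.*2.+1) (-1) ^+ i * a i.
have S_step n : S n.+1 = S n - a n.*2.+1 + a n.*2.+2.
  rewrite /S doubleS big_ord_recr [X in X + _ = _]big_ord_recr /=.
  by rewrite !exprS signr_double; ring.
suff inv n : 0 < S n /\ (a n.*2 <= S n \/ (0 < n)%N && (a n.*2.-1 <= a n.*2)).
  by case: (inv L).
elim: n => [|n [S_gt0 inv]].
  by rewrite /S big_ord_recr big_ord0 /= add0r mul1r; split; [exact: a_gt0|left].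
rewrite S_step doubleS /=.
have [rise|fall] := leP (a n.*2.+1) (a n.*2.+2).
  by split; [lra|right].
have drop : a n.*2.+1 < a n.*2.
  by rewrite ltNge; apply/negP => /logconvex_nondecr; lra.
case: inv => [ge_S|/andP[n_gt0 rise]].
  by have := a_gt0 n.*2.+2; split; [lra|left; lra].
have := @logconvex_nondecr n.*2.-1; rewrite prednK ?double_gt0 // => /(_ rise).
lra.
Qed.

(* For an alternating sum of even length, some weighting by i - c is negative:
   taking c to be the turning point k, each pair contributes
   (2j - k) (a (2j) - a (2j+1)) - a (2j+1) < 0. *)
Lemma logconvex_weighted_alternating_lt0 L : (0 < L)%N ->
  exists c : R, \sum_(i < L.*2) (i%:R - c) * ((-1) ^+ i * a i) < 0.
Proof.
move=> L_gt0; have [k cross] := logconvex_single_crossing L.*2.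
exists k%:R; rewrite (sum_pairs (fun i => (i%:R - k%:R) * ((-1) ^+ i * a i))).
have pair_lt0 j : (j < L)%N -> (j.*2%:R - k%:R) * ((-1) ^+ j.*2 * a j.*2)
    + ((j.*2.+1)%:R - k%:R) * ((-1) ^+ j.*2.+1 * a j.*2.+1) < 0.
  move=> jL; have := cross j.*2; rewrite ltn_double => /(_ jL).
  have := a_gt0 j.*2.+1.
  rewrite exprS signr_double mulN1r !mul1r -natr1; nra.
case: L L_gt0 {cross} pair_lt0 => // L _ pair_lt0.
rewrite big_ord_recl -[X in _ < X](addr0 0); apply: ltr_leD; first exact: pair_lt0.
by apply: sumr_le0 => j _; apply/ltW/pair_lt0.
Qed.

End LogConvexSequence.

Section NatPowers.
Local Open Scope nat_scope.

(* A discrete Bernoulli inequality, (1 - 1/M)^k >= 1 - k/M, cleared of denominators. *)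
Lemma bernoulli_nat (M k : nat) : M ^ k * (M - k) <= (M - 1) ^ k * M.
Proof.
elim: k => [|k IH]; first by rewrite !expn0 subn0.
rewrite !expnS.
have step : M * M ^ k * (M - k.+1) <= (M - 1) * (M ^ k * (M - k)).
  set X := M ^ k; nia.
by apply: (leq_trans step); rewrite -mulnA leq_mul.
Qed.

(* With
   M = (n+1)^2 the right-hand side is (M-1)^n (n+2)^2, so this is Bernoulli's
   inequality for (1 - 1/M)^n up to the polynomial bound M^2 <= (n+2)^2 (M - n). *)
Lemma self_power_logconvex n : n.+1 ^ (n.+1).*2 <= n ^ n * n.+2 ^ n.+2.
Proof.
pose M := n.+1 * n.+1.
have lhsE : n.+1 ^ (n.+1).*2 = M ^ n * M.
  by rewrite -mul2n expnM -expnSr /M mulnn.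
have rhsE : n ^ n * n.+2 ^ n.+2 = (M - 1) ^ n * n.+2 ^ 2.
  have -> : M - 1 = n * n.+2 by rewrite /M; lia.
  by rewrite expnMn -mulnA -expnD addn2.
rewrite lhsE rhsE -(@leq_pmul2r (M - n)); last by rewrite /M; lia.
apply: (@leq_trans ((M - 1) ^ n * M * M)).
  by rewrite mulnAC leq_mul // bernoulli_nat.
by rewrite -!mulnA leq_mul2l /M; apply/orP; right; nia.
Qed.

End NatPowers.

Section SelfPowerSequence.
Variable R : realFieldType.

Definition selfpow (t : R) (i : nat) : R := (i%:R * t) ^+ i.

Lemma selfpow_gt0 t i : 0 < t -> 0 < selfpow t i.
Proof.
by move=> t_gt0; case: i => [|i]; rewrite /selfpow ?expr0 // exprn_gt0 ?mulr_gt0.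
Qed.

(* For t >= 0 the terms (i t)^i form a log-convex sequence, since
   ((i+1) t)^(2(i+1)) and (i t)^i ((i+2) t)^(i+2) carry the same power of t. *)
Lemma selfpow_logconvex t i : 0 <= t ->
  selfpow t i.+1 ^+ 2 <= selfpow t i * selfpow t i.+2.
Proof.
move=> t_ge0; rewrite /selfpow.
have tE : t ^+ (i.+1).*2 = t ^+ i * t ^+ i.+2.
  by rewrite -exprD; congr (_ ^+ _); lia.
have lhsE : ((i.+1%:R * t) ^+ i.+1) ^+ 2
    = (i.+1 ^ (i.+1).*2)%N%:R * t ^+ (i.+1).*2.
  by rewrite -exprM exprMn natrX -mul2n [(2 * _)%N]mulnC.
have rhsE : (i%:R * t) ^+ i * (i.+2%:R * t) ^+ i.+2
    = (i ^ i * i.+2 ^ i.+2)%N%:R * t ^+ (i.+1).*2.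
  by rewrite tE natrM !natrX !exprMn; ring.
rewrite lhsE rhsE; apply: ler_wpM2r; first exact: exprn_ge0.
by rewrite ler_nat self_power_logconvex.
Qed.

Lemma selfpow_opp t i : selfpow (- t) i = (-1) ^+ i * selfpow t i.
Proof. rewrite /selfpow mulrN; exact: exprNn. Qed.

Lemma selfpow2_nondecr i : selfpow 2 i <= selfpow 2 i.+1.
Proof.
rewrite /selfpow -!natrM -!natrX ler_nat.
apply: (@leq_trans ((i.+1 * 2) ^ i)).
  by case: i => [//|i]; rewrite leq_exp2r //; lia.
by rewrite expnS leq_pmull // muln_gt0.
Qed.

End SelfPowerSequence.

Section PositiveSlopeRoots.
Variable R : rcfType.
Implicit Types (p : {poly R}) (x : R).

Lemma mu_mup p x : p != 0 -> \mu_x p = mup x p.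
Proof.
move=> p_neq0; apply/eqP; rewrite eqn_leq mup_geq // root_mu /=.
by rewrite -root_le_mu // -mup_geq.
Qed.

Lemma mu_simple p x : root p x -> p^`().[x] != 0 -> \mu_x p = 1%N.
Proof.
move=> p_x dp_x; have p_neq0 : p != 0.
  by apply: contraNneq dp_x => ->; rewrite derivC horner0.
by rewrite mu_deriv_root // muNroot.
Qed.

Lemma sgp_right_pos_slope p x : root p x -> 0 < p^`().[x] -> sgp_right p x = 1.
Proof.
move=> p_x dp_x; rewrite sgp_right_deriv // sgp_rightNroot ?gtr0_sg //.
by rewrite rootE gt_eqF.
Qed.

(* A polynomial with positive slope at each of its roots has at most one root:
   between two consecutive roots r1 < y it would be positive just right of r1
   and negative just left of y, although it has no root in between. *)
Lemma pos_slope_root_unique p :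
  (forall r, root p r -> 0 < p^`().[r]) ->
  forall r1 r2, root p r1 -> root p r2 -> r1 = r2.
Proof.
move=> slope; suff no_two r1 r2 : r1 < r2 -> root p r1 -> root p r2 -> False.
  move=> r1 r2 p_r1 p_r2; case: (ltgtP r1 r2) => // lt_r.
  - by case: (no_two _ _ lt_r p_r1 p_r2).
  - by case: (no_two _ _ lt_r p_r2 p_r1).
move=> lt_r12 p_r1 p_r2.
have p_neq0 : p != 0.
  by apply: contraTneq (slope _ p_r1) => ->; rewrite derivC horner0 ltxx.
have no_root := @next_noroot R p r1 r2.
have [lt_r1y p_y] : r1 < next_root p r1 r2 /\ root p (next_root p r1 r2).
  case: next_rootP => [p_eq0|y _ p_y y_in _|c _ -> _].
  - by rewrite p_eq0 eqxx in p_neq0.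
  - by rewrite (itvP y_in); split=> //; apply/rootP.
  - by rewrite max_l ?ltW.
set y := next_root p r1 r2 in lt_r1y p_y no_root *.
have prev_y : prev_root p r1 y = r1.
  apply/esym/is_prev_root; rewrite rootE.
  by apply: (PrevRootSpecNoRoot p_neq0 _ no_root); rewrite min_l // ltW.
have [z z_in] : exists z, z \in `]r1, y[ by exists ((r1 + y) / 2); exact: mid_in_itvoo.
have sg_right : Num.sg p.[z] = 1.
  by rewrite (sgr_neighpr z_in) (sgp_right_pos_slope p_r1 (slope _ p_r1)).
have sg_left : Num.sg p.[z] = -1.
  have z_left : z \in neighpl p r1 y by rewrite /neighpl prev_y.
  have dp_y := slope _ p_y.
  rewrite (sgr_neighpl z_left) (mu_simple p_y (lt0r_neq0 dp_y)).
  by rewrite (sgp_right_pos_slope p_y dp_y) expr1 mulr1.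
by move: sg_right; rewrite sg_left; lra.
Qed.

End PositiveSlopeRoots.

Section Pm.
Variable R : realType.
Implicit Types (m : nat) (x t : R).

Lemma pm_hornerE m x : (pm R m).[x] = \sum_(i < m.+1) selfpow x i.
Proof.
rewrite /pm hornerD hornerC horner_sum big_ord_recl /= /selfpow expr0.
rewrite big_add1 /= big_mkord; congr (_ + _); apply: eq_bigr => i _.
by rewrite horner_exp hornerZ hornerX.
Qed.

Lemma pm_deriv_hornerE m x :
  x * (pm R m)^`().[x] = \sum_(i < m.+1) i%:R * selfpow x i.
Proof.
rewrite /pm derivD derivC add0r raddf_sum horner_sum mulr_sumr.
rewrite big_ord_recl /= mul0r add0r big_add1 /= big_mkord.
apply: eq_bigr => i _; rewrite /selfpow exprZn derivZ derivXn hornerZ hornerMn.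
by rewrite hornerXn exprMn [x ^+ i.+1]exprS -mulr_natr; ring.
Qed.

Lemma pm_opp_hornerE m t :
  (pm R m).[- t] = \sum_(i < m.+1) (-1) ^+ i * selfpow t i.
Proof. by rewrite pm_hornerE; apply: eq_bigr => i _; rewrite selfpow_opp. Qed.

Lemma pm_gt0 m x : 0 <= x -> 0 < (pm R m).[x].
Proof.
move=> x_ge0; rewrite pm_hornerE big_ord_recl /selfpow expr0 ltr_pwDl //.
by apply: sumr_ge0 => i _; rewrite exprn_ge0 ?mulr_ge0.
Qed.

Lemma pm_neq0 m : pm R m != 0.
Proof. by apply: contraTneq (pm_gt0 m (lexx 0)) => ->; rewrite horner0 ltxx. Qed.

Lemma pm_root_lt0 m x : root (pm R m) x -> x < 0.
Proof. by apply: contraTT; rewrite -leNgt rootE => /(pm_gt0 m) /gt_eqF ->. Qed.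

(* Even m: at a negative x, p_m(x) is an alternating sum of odd length of the
   log-convex sequence (i |x|)^i, hence positive. *)
Lemma pm_even_noroot m x : ~~ odd m -> ~~ root (pm R m) x.
Proof.
move=> m_even; apply/negP => p_x; have t_gt0 : 0 < - x by rewrite oppr_gt0 (pm_root_lt0 p_x).
have m_eq : m = m./2.*2 by rewrite -[in LHS](odd_double_half m) (negbTE m_even).
have := logconvex_alternating_gt0 (fun i => selfpow_gt0 i t_gt0)
          (fun i => selfpow_logconvex i (ltW t_gt0)) m./2.
by rewrite -m_eq -pm_opp_hornerE opprK (rootP p_x) ltxx.
Qed.

(* Odd m: at a root r < 0, r p_m'(r) = \sum_i (i - c) (i r)^i for every c, and
   the weighted alternating sum lemma makes this negative for a suitable c. *)
Lemma pm_odd_root_slope m r : odd m -> root (pm R m) r -> 0 < (pm R m)^`().[r].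
Proof.
move=> m_odd p_r; have r_lt0 := pm_root_lt0 p_r.
have t_gt0 : 0 < - r by rewrite oppr_gt0.
have m_eq : m.+1 = m.+1./2.*2 by rewrite -[in LHS](odd_double_half m.+1) /= m_odd.
have [|c weighted] := logconvex_weighted_alternating_lt0
   (fun i => selfpow_gt0 i t_gt0) (fun i => selfpow_logconvex i (ltW t_gt0)) (L := m.+1./2).
  by rewrite half_gt0; case: m m_odd {p_r r_lt0 m_eq}.
have slopeE : \sum_(i < m.+1) (i%:R - c) * ((-1) ^+ i * selfpow (- r) i)
    = r * (pm R m)^`().[r] - c * (pm R m).[r].
  rewrite pm_deriv_hornerE pm_hornerE mulr_sumr -sumrB.
  by apply: eq_bigr => i _; rewrite -selfpow_opp opprK; ring.
rewrite -m_eq slopeE (rootP p_r) mulr0 subr0 in weighted; nra.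
Qed.

(* Odd m: p_m(-2) <= 0, since the terms (2i)^i are nondecreasing. *)
Lemma pm_odd_le0_at_minus2 m : odd m -> (pm R m).[-2] <= 0.
Proof.
move=> m_odd; have m_eq : m.+1 = m.+1./2.*2.
  by rewrite -[in LHS](odd_double_half m.+1) /= m_odd.
rewrite pm_opp_hornerE m_eq (sum_pairs (fun i => (-1) ^+ i * selfpow 2 i)).
apply: sumr_le0 => j _; rewrite exprS signr_double mulr1 mulN1r mul1r subr_le0.
exact: selfpow2_nondecr.
Qed.

End Pm.

Theorem theorem8p4 (R : realType) (m : nat) :
  (~~ odd m -> forall x : R, ~~ root (pm R m) x) /\
  (odd m -> exists x : R,
      [/\ root (pm R m) x, mup x (pm R m) = 1%N &
          forall y : R, root (pm R m) y -> y = x]).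
Proof.
split; first by move=> m_even x; exact: pm_even_noroot.
move=> m_odd; have slope r := @pm_odd_root_slope R m r m_odd.
have [x _ p_x] : exists2 x : R, -2 <= x <= 0 & root (pm R m) x.
  apply: poly_ivt; first by lra.
  by rewrite pm_odd_le0_at_minus2 // ltW // pm_gt0.
exists x; split => //.
  by rewrite -mu_mup ?pm_neq0 // mu_simple // lt0r_neq0 ?slope.
by move=> y p_y; exact: (pos_slope_root_unique (R := R) slope p_y p_x).
Qed.
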